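(* Let $G\subseteq W(\mathsf D_n)$ be a finite group acting on $L=\mathbb Z^{n+2}=\bigoplus_{i=-1}^n\mathbb Z l_i$ via $\Phi$. For $i\in\{-1,0,1,\dots,n\}$ let $f_i:G\to L$ be the coboundary $f_i(g)=\Phi(g)l_i-l_i$. Suppose $I\subseteq\{-1,1,2,\dots,n\}$ is an index set such that $\xi=\frac12\sum_{i\in I}f_i$ is an $L$-valued $1$-cocycle whose class $[\xi]\in\mathrm H^1(G,L)$ is nonzero. Then $-1\notin I$.
   Context: $W(\mathsf B_n)$ is the group of signed permutations of the $2n$ symbols $j^\pm$ ($j=1,\dots,n$), generated by the symmetric group $\mathfrak S_n$ (permuting indices) and the involutions $c_j$ exchanging $j^+$ and $j^-$; every element can be written as $c_{j_1}\cdots c_{j_t}\tau$ with distinct $j_i$ and $\tau\in\mathfrak S_n$. The character $\sigma(c_{j_1}\cdots c_{j_t}\tau)=(-1)^t$ has kernel $W(\mathsf D_n)$. The lattice $L$ with basis $l_{-1},l_0,l_1,\dots,l_n$ models $\mathrm{Pic}(\bar X)$ of a standard conic bundle with $n$ degenerate fibers ($l_0$ the fiber class, $l_j$ a component of the $j$-th degenerate fiber). For $g=c_{j_1}\cdots c_{j_t}\tau\in W(\mathsf D_n)$ ($t$ even), set $s(i)=-1$ if $i\in\{j_1,\dots,j_t\}$ and $s(i)=1$ otherwise; then $\Phi(g)$ is the integral matrix with $\Phi(g)l_0=l_0$, $\Phi(g)l_{-1}=l_{-1}+\frac t2 l_0-\sum_{i:\,s(i)=-1}l_i$, and for $v\ge1$,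 with $u=\tau^{-1}(v)$: $\Phi(g)l_v=l_u$ if $s(u)=1$ and $\Phi(g)l_v=l_0-l_u$ if $s(u)=-1$. *)

From HB Require Import structures.
From mathcomp Require Import all_boot all_order all_fingroup all_algebra.
Set Implicit Arguments. Unset Strict Implicit. Unset Printing Implicit Defensive.
Import GRing.Theory Num.Theory.
Local Open Scope ring_scope.

(* The 2n symbols j^± are encoded as pairs (j, b) : 'I_n * bool,
   with b = true for j^+ and b = false for j^-.
   Group law: mathcomp's ({perm _}) convention (g * h) x = h (g x). *)
Definition WB (n : nat) : {set {perm ('I_n * bool)}} :=
  [set g : {perm ('I_n * bool)} | [forall x : 'I_n * bool, g (x.1, ~~ x.2) == ((g x).1, ~~ (g x).2)]].

(* Writing g = c_{j1} ... c_{jt} * tau (flips first, then tau), we have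
   g(u^+) = tau(u)^{s(u)}; negs g = {j_1,...,j_t} = {u | s(u) = -1}. *)
Definition negs (n : nat) (g : {perm ('I_n * bool)}) : {set 'I_n} :=
  [set u | ~~ (g (u, true)).2].

(* sigma(g) = (-1)^t ; W(D_n) = kernel of sigma *)
Definition WD (n : nat) : {set {perm ('I_n * bool)}} :=
  [set g in WB n | ~~ odd #|negs g|].

Definition tauinv (n : nat) (g : {perm ('I_n * bool)}) (v : 'I_n) : 'I_n :=
  ((g^-1)%g (v, true)).1.

(* Indices of the basis of L = Z^{n+2}: l_{-1} ~ 0, l_0 ~ 1, l_j ~ j+1 (j=1..n,
   i.e. the ordinal i : 'I_n (i = j-1) corresponds to index i+2). *)
Definition im1 {n : nat} : 'I_(n.+2) := ord0.
Definition i0 {n : nat} : 'I_(n.+2) := lift ord0 ord0.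
Definition ilv {n : nat} (i : 'I_n) : 'I_(n.+2) := lift ord0 (lift ord0 i).

Definition lvec {n : nat} (k : 'I_(n.+2)) : 'cV[int]_(n.+2) := delta_mx k 0.

Definition Phi_lm1 (n : nat) (g : {perm ('I_n * bool)}) : 'cV[int]_(n.+2) :=
  lvec im1 + (#|negs g|./2)%:Z *: lvec i0 - \sum_(i in negs g) lvec (ilv i).

Definition Phi_lv (n : nat) (g : {perm ('I_n * bool)}) (v : 'I_n) : 'cV[int]_(n.+2) :=
  let u := tauinv g v in
  if u \in negs g then lvec i0 - lvec (ilv u) else lvec (ilv u).

Definition Phi (n : nat) (g : {perm ('I_n * bool)}) : 'M[int]_(n.+2) :=
  Phi_lm1 g *m (lvec im1)^T + lvec i0 *m (lvec i0)^T
  + \sum_(v < n) Phi_lv g v *m (lvec (ilv v))^T.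

Definition fcob (n : nat) (i : 'I_(n.+2)) (g : {perm ('I_n * bool)}) : 'cV[int]_(n.+2) :=
  Phi g *m lvec i - lvec i.

From HB Require Import structures.
From mathcomp Require Import all_boot all_order all_fingroup all_algebra.
From mathcomp Require Import zify.
Import GRing.Theory Num.Theory.
Local Open Scope ring_scope.

(* Suppose l_{-1} is in I and fix g. As l_0 is not, 2 xi(g) = f_{-1}(g) + E with
   E = sum_{j in I, j >= 1} f_j(g), and it suffices to show E = f_{-1}(g): then
   xi = f_{-1} is the coboundary of l_{-1}. Neither vector has an l_{-1}-coordinate.
   On each l_j, E - f_{-1}(g) = 2 xi(g) - 2 f_{-1}(g) is even, while a direct
   computation puts it in [-1, 1]. Finally the linear form 2 x_0 + sum_j x_j is
   fixed by Phi(g) for g in W(D_n) (the l_{-1} column needs #negs even), so it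
   kills every coboundary, which forces the l_0-coordinates to agree as well. *)

Variant lidx_spec (n : nat) : 'I_(n.+2) -> Type :=
  | LidxM1 : lidx_spec n im1
  | Lidx0 : lidx_spec n i0
  | LidxV i : lidx_spec n (ilv i).

Lemma lidxP n (k : 'I_(n.+2)) : lidx_spec n k.
Proof.
case: (unliftP ord0 k) => [j ->|->]; last exact: LidxM1.
by case: (unliftP ord0 j) => [i ->|->]; [exact: LidxV | exact: Lidx0].
Qed.

Section Basis.
Variable n : nat.

Lemma ilv_inj : injective (@ilv n).
Proof. by move=> i j /lift_inj/lift_inj. Qed.

Lemma ilv_neq_im1 (i : 'I_n) : (ilv i == im1) = false.
Proof. by []. Qed.

Lemma ilv_neq_i0 (i : 'I_n) : (ilv i == i0) = false.
Proof. by rewrite -val_eqE. Qed.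

Lemma i0_neq_im1 : (@i0 n == im1) = false.
Proof. by []. Qed.

Lemma big_lidx (V : nmodType) (F : 'I_(n.+2) -> V) :
  \sum_(k < n.+2) F k = F im1 + F i0 + \sum_(i < n) F (ilv i).
Proof. by rewrite !big_ord_recl addrA. Qed.

Lemma lvecE (k r : 'I_(n.+2)) : lvec k r 0 = (r == k)%:R.
Proof. by rewrite mxE eqxx andbT. Qed.

Lemma mul_lvec_tr (A : 'cV[int]_(n.+2)) (j k : 'I_(n.+2)) :
  A *m (lvec j)^T *m lvec k = A *+ (j == k).
Proof.
rewrite -mulmxA trmx_delta mul_delta_mx_cond (_ : delta_mx 0 0 = 1%:M).
  by case: (j == k); rewrite ?mulr1n ?mulmx1 // mulr0n mulmx0.
by apply/matrixP => i i'; rewrite !ord1 !mxE.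
Qed.

Lemma sum_eq_natr (J : {set 'I_n}) (a : 'I_n) :
  \sum_(v in J) (a == v)%:R = (a \in J)%:R :> int.
Proof.
rewrite big_mkcond (bigD1 a) //= eqxx big1 ?addr0 => [|v /negbTE]; last first.
  by rewrite eq_sym => ->; case: (v \in J).
by case: (a \in J).
Qed.

End Basis.

Section PhiColumns.
Variables (n : nat) (g : {perm ('I_n * bool)}).

Lemma Phi_im1 : Phi g *m lvec im1 = Phi_lm1 g.
Proof.
rewrite /Phi 2!mulmxDl mulmx_suml !mul_lvec_tr eqxx i0_neq_im1 mulr0n addr0.
by rewrite big1 ?addr0 // => v _; rewrite mul_lvec_tr ilv_neq_im1 mulr0n.
Qed.

Lemma Phi_i0 : Phi g *m lvec i0 = lvec i0.
Proof.
rewrite /Phi 2!mulmxDl mulmx_suml !mul_lvec_tr eqxx eq_sym i0_neq_im1 mulr0n add0r.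
by rewrite big1 ?addr0 // => v _; rewrite mul_lvec_tr ilv_neq_i0 mulr0n.
Qed.

Lemma Phi_ilv (w : 'I_n) : Phi g *m lvec (ilv w) = Phi_lv g w.
Proof.
rewrite /Phi 2!mulmxDl mulmx_suml !mul_lvec_tr !(eq_sym _ (ilv w)).
rewrite ilv_neq_im1 ilv_neq_i0 !mulr0n !add0r (bigD1 w) //= mul_lvec_tr eqxx mulr1n.
rewrite big1 ?addr0 //.
by move=> v /negbTE vw; rewrite mul_lvec_tr (inj_eq (@ilv_inj n)) vw mulr0n.
Qed.

Lemma fcob_i0 : fcob i0 g = 0.
Proof. by rewrite /fcob Phi_i0 subrr. Qed.

Lemma fcob_coord_im1 (k : 'I_(n.+2)) : fcob k g im1 0 = 0.
Proof.
case: k / lidxP => [||v].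
- rewrite /fcob Phi_im1 /Phi_lm1 !mxE summxE big1 => [|v _]; last by rewrite lvecE.
  by rewrite eqxx (eq_sym im1) i0_neq_im1 mulr0 addr0 subr0 subrr.
- by rewrite fcob_i0 mxE.
- rewrite /fcob Phi_ilv /Phi_lv; case: ifP => _;
  by rewrite !mxE !(eq_sym im1) ?i0_neq_im1 !ilv_neq_im1 /= ?subrr.
Qed.

Lemma fcob_im1_ilv (i : 'I_n) : fcob im1 g (ilv i) 0 = - (i \in negs g)%:R.
Proof.
rewrite /fcob Phi_im1 /Phi_lm1 !mxE summxE ilv_neq_im1 ilv_neq_i0 mulr0 addr0 subr0.
under eq_bigr do rewrite lvecE (inj_eq (@ilv_inj n)).
by rewrite sum_eq_natr sub0r.
Qed.

End PhiColumns.

Section SignedPermutations.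
Variables (n : nat) (g : {perm ('I_n * bool)}).
Hypothesis gWB : g \in WB n.

Definition tau (i : 'I_n) : 'I_n := (g (i, true)).1.

Lemma WB_flip (x : 'I_n * bool) : g (x.1, ~~ x.2) = ((g x).1, ~~ (g x).2).
Proof. by move: gWB; rewrite inE => /forallP/(_ x)/eqP. Qed.

Lemma WB_fst (x : 'I_n * bool) : (g x).1 = tau x.1.
Proof.
case: x => i []; rewrite /tau //.
by have := WB_flip (i, true) => /= ->.
Qed.

Lemma WB_fiber (j : 'I_n) (c : bool) : exists b, g (j, b) = (tau j, c).
Proof.
rewrite /tau; case E: (g (j, true)) => [v d] /=.
case: (eqVneq d c) => [<-|/negPf dc]; first by exists true.
by exists false; have := WB_flip (j, true); rewrite /= E => ->; case: c d dc {E} => [] [].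
Qed.

Lemma tau_inj : injective tau.
Proof.
move=> i j eq_tau; have [b gjb] := WB_fiber j (g (i, true)).2.
have : g (i, true) = g (j, b) by rewrite gjb -eq_tau /tau; case: (g (i, true)).
by case/perm_inj.
Qed.

Lemma tau_tauinv (v : 'I_n) : tau (tauinv g v) = v.
Proof. by rewrite -WB_fst /tauinv permKV. Qed.

Lemma tauinv_eq (v i : 'I_n) : (i == tauinv g v) = (tau i == v).
Proof. by rewrite -(inj_eq tau_inj) tau_tauinv. Qed.

Lemma Phi_lv_ilv (v i : 'I_n) :
  Phi_lv g v (ilv i) 0 = (tau i == v)%:R * (-1) ^+ (i \in negs g).
Proof.
rewrite -tauinv_eq /Phi_lv; case: ifP => neg;
  rewrite !mxE ?ilv_neq_i0 (inj_eq (@ilv_inj n)) andbT;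
  by case: eqP => [->|_]; rewrite ?neg ?mul0r ?subr0 ?mul1r.
Qed.

Lemma sum_fcob_ilv (J : {set 'I_n}) (i : 'I_n) :
  (\sum_(v in J) fcob (ilv v) g) (ilv i) 0
    = (tau i \in J)%:R * (-1) ^+ (i \in negs g) - (i \in J)%:R.
Proof.
rewrite summxE; under eq_bigr do
  rewrite /fcob Phi_ilv !mxE Phi_lv_ilv andbT (inj_eq (@ilv_inj n)).
by rewrite sumrB -mulr_suml !sum_eq_natr.
Qed.

End SignedPermutations.

Arguments tau {n}.

Section InvariantForm.
Variable n : nat.

Definition wform : 'rV[int]_(n.+2) := \row_k (if k == i0 then 2 else (k != im1)%:R).

Lemma wform_lvec (k : 'I_(n.+2)) : wform *m lvec k = (wform 0 k)%:M.
Proof. by rewrite /lvec -colE; apply/matrixP => i j; rewrite !ord1 !mxE. Qed.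

Lemma wform_mulE (x : 'cV[int]_(n.+2)) :
  (wform *m x) 0 0 = 2 * x i0 0 + \sum_(i < n) x (ilv i) 0.
Proof.
rewrite mxE big_lidx !mxE eqxx (eq_sym im1) i0_neq_im1 mul0r add0r.
by congr (_ + _); apply: eq_bigr => i _; rewrite mxE ilv_neq_i0 ilv_neq_im1 mul1r.
Qed.

Lemma wform_im1 : wform 0 im1 = 0.
Proof. by rewrite mxE (eq_sym im1) i0_neq_im1 eqxx. Qed.

Lemma wform_i0 : wform 0 i0 = 2.
Proof. by rewrite mxE eqxx. Qed.

Lemma wform_ilv (i : 'I_n) : wform 0 (ilv i) = 1.
Proof. by rewrite mxE ilv_neq_i0 ilv_neq_im1. Qed.

Lemma mulmx_lvecP m (A B : 'M[int]_(m, n.+2)) :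
  (forall k, A *m lvec k = B *m lvec k) -> A = B.
Proof.
move=> eqAB; apply/matrixP => i k.
by move/matrixP/(_ i 0): (eqAB k); rewrite -!colE !mxE.
Qed.

Lemma wform_Phi (g : {perm ('I_n * bool)}) : g \in WD n -> wform *m Phi g = wform.
Proof.
case/setIdP => _ even_negs; apply: mulmx_lvecP => k; rewrite -mulmxA.
case: k / lidxP => [||v]; rewrite ?Phi_im1 ?Phi_i0 ?Phi_ilv //.
- rewrite /Phi_lm1 mulmxBr mulmxDr -scalemxAr mulmx_sumr !wform_lvec.
  under eq_bigr do rewrite wform_lvec wform_ilv.
  rewrite sumr_const wform_im1 wform_i0 scale_scalar_mx.
  apply/matrixP => i j; rewrite !ord1 !(mxE, mulmxnE) /=.
  by have := even_halfK even_negs; lia.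
- rewrite /Phi_lv; case: ifP => _; rewrite ?mulmxBr !wform_lvec ?wform_i0 !wform_ilv //.
  by apply/matrixP => i j; rewrite !ord1 !mxE.
Qed.

Lemma wform_fcob (g : {perm ('I_n * bool)}) (k : 'I_(n.+2)) :
  g \in WD n -> wform *m fcob k g = 0.
Proof. by move=> gWD; rewrite /fcob mulmxBr mulmxA wform_Phi ?subrr. Qed.

End InvariantForm.

Arguments wform {n}.

Lemma half_sum_fcob_im1 n (g : {perm ('I_n * bool)}) (I : {set 'I_(n.+2)})
    (y : 'cV[int]_(n.+2)) :
  g \in WD n -> i0 \notin I -> im1 \in I ->
  2%:Z *: y = \sum_(k in I) fcob k g -> y = fcob im1 g.
Proof.
move=> gWD i0I im1I; have gWB : g \in WB n by case/setIdP: gWD.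
pose J := [set v | ilv v \in I]; pose E := \sum_(v in J) fcob (ilv v) g.
have -> : \sum_(k in I) fcob k g = fcob im1 g + E.
  rewrite big_mkcond big_lidx im1I (negbTE i0I) addr0 /E [in RHS]big_mkcond.
  by under [in RHS]eq_bigr do rewrite inE.
move=> two_y; suff E_im1 : E = fcob im1 g.
  by apply: (@scalemx_inj _ _ _ 2%:Z) => //; rewrite two_y E_im1 -mulr2n -scaler_nat.
have coord_ilv i : E (ilv i) 0 = fcob im1 g (ilv i) 0.
  move/matrixP/(_ (ilv i) 0): two_y.
  rewrite [LHS]mxE [RHS]mxE fcob_im1_ilv /E sum_fcob_ilv //.
  case: (tau g i \in J) (i \in J) (i \in negs g) => [] [] [];
  by rewrite ?expr0 ?expr1; lia.
have coord_im1 : E im1 0 = fcob im1 g im1 0.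
  by rewrite summxE fcob_coord_im1 big1 // => v _; rewrite fcob_coord_im1.
have coord_i0 : E i0 0 = fcob im1 g i0 0.
  have : (wform *m (E - fcob im1 g)) 0 0 = 0.
    rewrite mulmxBr mulmx_sumr wform_fcob // big1 ?subrr ?mxE // => v _.
    exact: wform_fcob.
  rewrite wform_mulE big1 => [|i _]; last by rewrite mxE [X in _ + X]mxE coord_ilv subrr.
  rewrite addr0 mxE [X in _ + X]mxE => /eqP.
  by rewrite mulf_eq0 subr_eq0 => /eqP.
apply/matrixP => k j; rewrite ord1.
by case: k / lidxP.
Qed.

Theorem lemma3p2 (n : nat) (G : {group {perm ('I_n * bool)}}) (I : {set 'I_(n.+2)}) :
  G \subset WD n ->
  (@i0 n) \notin I ->
  (exists xi : {perm ('I_n * bool)} -> 'cV[int]_(n.+2),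
     (forall g, g \in G -> 2%:Z *: xi g = \sum_(i in I) fcob i g) /\
     (forall g h, g \in G -> h \in G -> xi (g * h)%g = xi g + Phi g *m xi h) /\
     ~ (exists m : 'cV[int]_(n.+2), forall g, g \in G -> xi g = Phi g *m m - m)) ->
  (@im1 n) \notin I.
Proof.
move=> sGWD i0I [xi [two_xi [_ xi_not_cobound]]]; apply/negP => im1I.
apply: xi_not_cobound; exists (lvec im1) => g gG.
exact: half_sum_fcob_im1 (subsetP sGWD g gG) i0I im1I (two_xi g gG).
Qed.
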